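(* Fix a timestep $T$ and consider two spiking neurons $\hat\sigma^T$ and $\tilde\sigma^T$ (same threshold $u_{th}$) with the same temporal input $\tilde h^{T-1}=\hat h^{T-1}$ and spatial input features $\hat x^T,\tilde x^T$. Suppose $\hat u^T=\hat h^{T-1}+\hat x^T$ is a random variable whose distribution is a $u_{th}$-Neighborhood-Finite Distribution, and suppose $|\tilde x^T-\hat x^T|\le\epsilon$. Then the probability that the two neurons produce different outputs, $P[\hat\sigma^T(\hat x^T)\neq\tilde\sigma^T(\tilde x^T)]$, has an upper bound proportional to $\epsilon$ (i.e. it is at most a constant multiple of $\epsilon$, the constant depending only on the distribution of $\hat u^T$).
   Context: A Leaky Integrate-and-Fire (LIF) spiking neuron with firing threshold $u_{th}$, reset potential $V_{reset}$ and decay factor $\beta\in(0,1)$ receives spatial input features $x^1,x^2,\dots$ and evolves by $u^t=h^{t-1}+x^t$, $s^t=\mathrm{Hea}(u^t-u_{th})$, $h^t=V_{reset}s^t+\beta u^t(1-s^t)$, where $\mathrm{Hea}(y)=1$ if $y\ge 0$ and $0$ otherwise; $u^t$ is the membrane potential, $h^{t-1}$ the temporal input, and the output at timestep $t$ is written $\sigma^t(x^t)=s^t$. A probability density $p$ is an $m$-Neighborhood-Finite Distribution if there exists $\epsilon>0$ with $\sup_{x\in[m-\epsilon,m+\epsilon]}p(x)<+\infty$; a random variable follows such a distribution if its density does. *)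

From HB Require Import structures.
From mathcomp Require Import all_boot all_order all_algebra.
From mathcomp Require Import all_classical all_reals all_analysis.
Set Implicit Arguments. Unset Strict Implicit. Unset Printing Implicit Defensive.
Import Order.TTheory GRing.Theory Num.Theory.
Local Open Scope classical_set_scope.
Local Open Scope ring_scope.

Definition Hea (R : realType) (y : R) : R := if 0 <= y then 1 else 0.

Definition lif_u (R : realType) (h x : R) : R := h + x.

(* Spike output sigma^t(x^t) = s^t = Hea(u^t - u_th), given temporal input h^{t-1}. *)
Definition lif_spike (R : realType) (uth h x : R) : R := Hea (lif_u h x - uth).

Definition lif_h (R : realType) (uth Vreset beta h x : R) : R :=
  Vreset * lif_spike uth h x + beta * lif_u h x * (1 - lif_spike uth h x).

Definition is_density_of (R : realType) d (T : measurableType d)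
  (P : probability T R) (X : T -> R) (p : R -> R) : Prop :=
  measurable_fun setT p /\ (forall x, 0 <= p x) /\
  forall A : set R, measurable A ->
    P (X @^-1` A) = (\int[@lebesgue_measure R]_(x in A) (p x)%:E)%E.

Definition neighborhood_finite (R : realType) (p : R -> R) (m : R) : Prop :=
  exists2 eps : R, 0 < eps &
    exists M : R, forall x, m - eps <= x <= m + eps -> p x <= M.

From HB Require Import structures.
From mathcomp Require Import all_boot all_order all_algebra.
From mathcomp Require Import all_classical all_reals all_analysis.
From mathcomp Require Import measurable_realfun ring lra.
Import Order.TTheory GRing.Theory Num.Theory.
Local Open Scope classical_set_scope.
Local Open Scope ring_scope.

(* Two spikes can only differ when the threshold lies between the two membrane
   potentials, so a perturbation of size eps forces [uhat] into the interval
   [uth - eps, uth + eps].  Near [uth] the density of [uhat] is bounded by some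
   M, so this interval has probability at most 2 M eps when eps is small; for
   eps beyond the neighbourhood radius e the trivial bound 1 <= eps / e
   suffices. *)

Lemma Hea_neq_itv (R : realType) (c eps u v : R) :
  `|v - u| <= eps -> Hea (u - c) != Hea (v - c) ->
  u \in `[c - eps, c + eps].
Proof.
rewrite /Hea in_itv /= ler_norml => /andP[lo hi].
by have [|] := leP 0 (u - c); have [|] := leP 0 (v - c);
  rewrite ?eqxx // => *; apply/andP; split; lra.
Qed.

Lemma measurable_Hea_neq (R : realType) d (T : measurableType d)
    (f g : T -> R) :
  measurable_fun setT f -> measurable_fun setT g ->
  measurable [set w | Hea (f w) != Hea (g w)].
Proof.
move=> mf mg; have mHea (h : T -> R) : measurable_fun setT h ->
    measurable_fun setT (fun w => Hea (h w) : R).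
  by move=> mh; apply: measurable_fun_if => //; exact: measurable_fun_ler.
have := measurable_neg (measurable_fun_eqr (mHea _ mf) (mHea _ mg)).
by move=> /(_ measurableT [set true] I); rewrite setTI.
Qed.

Section density_itv.
Context {R : realType} {d : measure_display} {T : measurableType d}.
Context {P : probability T R} {X : T -> R} {p : R -> R}.
Hypothesis mX : measurable_fun setT X.
Hypothesis Xp : is_density_of P X p.

Lemma density_itv_le (a b M : R) : a <= b ->
  (forall x, a <= x <= b -> p x <= M) ->
  (P (X @^-1` `[a, b]) <= (M * (b - a))%:E)%E.
Proof.
move: Xp => [mp [p0 dens]] ab pM; rewrite dens; last exact: measurable_itv.
have -> : (M * (b - a))%:E = (\int[lebesgue_measure]_(x in `[a, b]) cst M%:E x)%E.
  rewrite integral_cst; last exact: measurable_itv.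
  have := lebesgue_measure_itv `[a, b]; rewrite /= lte_fin => ->.
  have [_|ba] := ltrP a b; first by rewrite EFinM EFinB.
  have -> : b = a by apply/eqP; rewrite eq_le ab ba.
  by rewrite subrr mulr0 mule0.
apply: (@ge0_le_integral _ _ _ lebesgue_measure _ (measurable_itv `[a, b])
  (fun x => (p x)%:E) (fun _ => M%:E)).
- by move=> x _; rewrite lee_fin.
- by apply/measurable_EFinP; exact: measurable_funS mp.
- exact: measurable_cst.
- by move=> x; rewrite /= in_itv /= => /pM; rewrite lee_fin.
Qed.

Lemma density_ball_le (m : R) : neighborhood_finite p m ->
  exists2 C : R, 0 <= C & forall eps, 0 <= eps ->
    (P (X @^-1` `[(m - eps)%R, (m + eps)%R]) <= (C * eps)%:E)%E.
Proof.
move=> [e e0 [M pM]]; move: (Xp) => [_ [p0 _]].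
have M0 : 0 <= M by apply: le_trans (p0 m) (pM _ _); apply/andP; split; lra.
have e_inv0 : 0 <= e^-1 by rewrite invr_ge0 ltW.
exists (2 * M + e^-1) => [|eps eps0]; first lra.
have mI : measurable (X @^-1` `[m - eps, m + eps]).
  by rewrite -[_ @^-1` _]setTI; apply: mX => //; exact: measurable_itv.
have [le_eps_e|lt_e_eps] := leP eps e.
  apply: le_trans; first apply: (density_itv_le _ _ M) => [|x /andP[x1 x2]].
  - lra.
  - by apply: pM; apply/andP; split; lra.
  have := mulr_ge0 e_inv0 eps0; rewrite lee_fin mulrDl; lra.
have epse : 1 <= e^-1 * eps by rewrite mulrC ler_pdivlMr // mul1r ltW.
apply: le_trans (probability_le1 P mI) _; rewrite lee_fin mulrDl.
have : 0 <= 2 * M * eps by rewrite !mulr_ge0.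
lra.
Qed.

End density_itv.

Theorem lemma2 (R : realType) (d : measure_display) (T : measurableType d)
  (P : probability T R) (uth : R) (uhat : T -> R) (p : R -> R) :
  measurable_fun setT uhat ->
  is_density_of P uhat p ->
  neighborhood_finite p uth ->
  exists C : R, 0 <= C /\
    forall (eps : R) (h xhat xtil : T -> R),
      0 <= eps ->
      measurable_fun setT h -> measurable_fun setT xhat -> measurable_fun setT xtil ->
      (forall w, lif_u (h w) (xhat w) = uhat w) ->
      (forall w, `|xtil w - xhat w| <= eps) ->
      (P [set w | lif_spike uth (h w) (xhat w) != lif_spike uth (h w) (xtil w)]
         <= (C * eps)%:E)%E.
Proof.
move=> muhat up /(density_ball_le muhat up) [C C0 ball_le].
exists C; split => // eps h xhat xtil eps0 mh mxhat mxtil hu close.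
apply: le_trans (ball_le _ eps0).
apply: le_measure; rewrite ?inE.
- apply: measurable_Hea_neq; apply: measurable_funB => //;
    exact: measurable_funD.
- by rewrite -[_ @^-1` _]setTI; apply: muhat => //; exact: measurable_itv.
move=> w; rewrite /= /lif_spike -(hu w) => /Hea_neq_itv; apply.
by rewrite /lif_u opprD addrACA subrr add0r close.
Qed.
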